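(* There exists a deterministic algorithm that finds the sink of any $n$-dimensional Matoušek-type USO using at most $n$ vertex evaluations.
   Context: All vectors and matrices are over $GF(2)$; $\oplus$ denotes xor. An orientation of the hypercube $\{0,1\}^n$ is given by an outmap $o:\{0,1\}^n\to\{0,1\}^n$, the edge $\{v,v\oplus e_i\}$ being directed away from $v$ iff $o(v)_i=1$. An $n$-dimensional Matoušek-type USO is an orientation $o(v)=M(v\oplus s)$ with $M=PAP^T$ for a permutation matrix $P$ and an invertible upper-triangular $A\in\{0,1\}^{n\times n}$, and $s\in\{0,1\}^n$, the unique sink ($o(s)=0$). A sink-finding algorithm queries vertices $v$ and receives $o(v)$; it succeeds when it can output $s$. *)

(* Vertices of {0,1}^n are column vectors over 'F_2;
   xor is + in 'F_2. *)
From mathcomp Require Import all_boot all_order all_algebra all_fingroup.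
Set Implicit Arguments. Unset Strict Implicit. Unset Printing Implicit Defensive.
Import GRing.Theory.
Local Open Scope ring_scope.

Definition vertex (n : nat) := 'cV['F_2]_n.

Definition upper_triangular (n : nat) (A : 'M['F_2]_n) : Prop :=
  forall i j : 'I_n, (j < i)%N -> A i j = 0.

Definition matousek_outmap (n : nat) (sigma : 'S_n) (A : 'M['F_2]_n)
    (s : vertex n) : vertex n -> vertex n :=
  fun v => (perm_mx sigma *m A *m (perm_mx sigma)^T) *m (v + s).

Definition is_matousek_uso (n : nat) (o : vertex n -> vertex n) (s : vertex n)
  : Prop :=
  exists (sigma : 'S_n) (A : 'M['F_2]_n),
    upper_triangular A /\ A \in unitmx /\ o = matousek_outmap sigma A s.

(* A deterministic adaptive sink-finding algorithm for dimension n: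
   given the history of (queried vertex, answer) pairs, it chooses the next
   query; given the final history it outputs a vertex. *)
Record algorithm (n : nat) := Algorithm {
  next_query : seq (vertex n * vertex n) -> vertex n;
  output : seq (vertex n * vertex n) -> vertex n }.

Fixpoint history (n : nat) (alg : algorithm n) (o : vertex n -> vertex n)
    (k : nat) : seq (vertex n * vertex n) :=
  match k with
  | 0 => [::]
  | k'.+1 => let h := history alg o k' in
             let q := next_query alg h in rcons h (q, o q)
  end.

(* alg finds the sink of o using at most k vertex evaluations (making
   exactly k queries is no loss, since extra queries can be ignored). *)
Definition finds_sink_within (n : nat) (alg : algorithm n)
    (o : vertex n -> vertex n) (s : vertex n) (k : nat) : Prop :=
  output alg (history alg o k) = s.

From mathcomp Require Import all_boot all_order all_algebra all_fingroup.
From mathcomp Require Import zify.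
Set Implicit Arguments. Unset Strict Implicit.
Import GRing.Theory.
Local Open Scope ring_scope.

(* Starting from 0, repeatedly jump from v to v + o(v), i.e. flip every
   outgoing edge; the output is the n-th such vertex.  Since
   o(v) = M (v + s) with M = P A P^T, the iterates satisfy
   v_k + s = (I + M)^k (v_0 + s).  Over GF(2) an invertible upper-triangular
   A has unit diagonal, so I + A is strictly upper triangular, hence
   (I + A)^n = 0; as I + M = P (I + A) P^T, also (I + M)^n = 0, i.e. v_n = s. *)

Section StrictlyUpperTriangular.

Variables (R : pzRingType) (n m : nat) (B : 'M[R]_n).
Hypothesis B_strict_upper : forall i j : 'I_n, (j <= i)%N -> B i j = 0.

Lemma iter_strict_upper_mulmx_bottom k (w : 'M[R]_(n, m)) (i : 'I_n) j :
  (n - k <= i)%N -> iter k (mulmx B) w i j = 0.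
Proof.
elim: k w i => [|k IHk] w i le_i /=.
  by rewrite subn0 leqNgt ltn_ord in le_i.
rewrite mxE big1 // => l _.
have [le_li | lt_il] := leqP l i; first by rewrite B_strict_upper ?mul0r.
by rewrite IHk ?mulr0 //; have := ltn_ord l; lia.
Qed.

Lemma iter_strict_upper_mulmx_nilpotent (w : 'M[R]_(n, m)) :
  iter n (mulmx B) w = 0.
Proof.
by apply/matrixP => i j; rewrite mxE iter_strict_upper_mulmx_bottom ?subnn.
Qed.

End StrictlyUpperTriangular.

Lemma iter_mulmx_conj (R : pzRingType) n m (P Q B : 'M[R]_n)
    (w : 'M[R]_(n, m)) k :
    Q *m P = 1%:M ->
  iter k (mulmx (P *m B *m Q)) (P *m w) = P *m iter k (mulmx B) w.
Proof.
move=> QP; elim: k => [|k /= ->] //.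
by rewrite -!mulmxA (mulmxA Q) QP mul1mx.
Qed.

Lemma iter_add_affine (R : pzRingType) n (M : 'M[R]_n) (s v : 'cV[R]_n) k :
  iter k (fun v => v + M *m (v + s)) v + s = iter k (mulmx (1%:M + M)) (v + s).
Proof. by elim: k => [|k /= <-] //; rewrite mulmxDl mul1mx addrAC. Qed.

Lemma perm_mx_trK (R : pzRingType) n (sigma : 'S_n) :
  (perm_mx sigma)^T *m perm_mx sigma = 1%:M :> 'M[R]_n.
Proof. by rewrite tr_perm_mx -perm_mxM mulVg perm_mx1. Qed.

Lemma perm_mxK_tr (R : pzRingType) n (sigma : 'S_n) :
  perm_mx sigma *m (perm_mx sigma)^T = 1%:M :> 'M[R]_n.
Proof. by rewrite tr_perm_mx -perm_mxM mulgV perm_mx1. Qed.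

Lemma unitmx_trig_diag_neq0 (F : fieldType) n (A : 'M[F]_n) (i : 'I_n) :
  is_trig_mx A -> A \in unitmx -> A i i != 0.
Proof.
move=> A_trig; rewrite unitmxE unitfE (det_trig A_trig).
by move/prodf_neq0; apply.
Qed.

Lemma F2_neq0_eq1 (x : 'F_2) : x != 0 -> x = 1.
Proof. by move=> x_neq0; apply/val_inj; move: x_neq0; case: x => [[|[|]]]. Qed.

Lemma upper_triangular_unitmx_diag n (A : 'M['F_2]_n) (i : 'I_n) :
  upper_triangular A -> A \in unitmx -> A i i = 1.
Proof.
move=> A_upper A_unit; apply: F2_neq0_eq1.
have trA_trig : is_trig_mx A^T.
  by apply/is_trig_mxP => k l lt_kl; rewrite mxE A_upper.
by have := unitmx_trig_diag_neq0 i trA_trig; rewrite unitmx_tr mxE; apply.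
Qed.

Lemma upper_triangular_unitmx_add1 n (A : 'M['F_2]_n) :
    upper_triangular A -> A \in unitmx ->
  forall i j : 'I_n, (j <= i)%N -> (1%:M + A) i j = 0.
Proof.
move=> A_upper A_unit i j; rewrite leq_eqVlt => /predU1P [/val_inj -> | lt_ji].
  by rewrite !mxE eqxx upper_triangular_unitmx_diag // addrr_pchar2 ?pchar_Fp.
by rewrite !mxE A_upper // -val_eqE /= gtn_eqF ?addr0.
Qed.

Definition flip_out_edges {n} (h : seq (vertex n * vertex n)) : vertex n :=
  let: (v, ov) := last (0, 0) h in v + ov.

Definition flip_algorithm n : algorithm n :=
  Algorithm (@flip_out_edges n) (@flip_out_edges n).

Lemma flip_out_edges_history n (o : vertex n -> vertex n) k :
  flip_out_edges (history (flip_algorithm n) o k) = iter k (fun v => v + o v) 0.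
Proof.
elim: k => [|k /= <-]; first by rewrite /flip_out_edges /= addr0.
by rewrite {1}/flip_out_edges last_rcons.
Qed.

Theorem theorem18 :
  exists alg : forall n : nat, algorithm n,
    forall (n : nat) (o : vertex n -> vertex n) (s : vertex n),
      is_matousek_uso o s -> finds_sink_within (alg n) o s n.
Proof.
exists flip_algorithm => n o s [sigma [A [A_upper [A_unit ->]]]].
rewrite /finds_sink_within /= flip_out_edges_history /matousek_outmap.
set P := perm_mx sigma.
have conj_add1 : 1%:M + P *m A *m P^T = P *m (1%:M + A) *m P^T.
  by rewrite mulmxDr mulmxDl mulmx1 perm_mxK_tr.
have s_conj : s = P *m (P^T *m s) by rewrite mulmxA perm_mxK_tr mul1mx.
have sink_reached : iter n (fun v => v + P *m A *m P^T *m (v + s)) 0 + s = 0.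
  rewrite iter_add_affine add0r conj_add1 s_conj.
  rewrite iter_mulmx_conj ?perm_mx_trK //.
  have add1_strict := upper_triangular_unitmx_add1 A_upper A_unit.
  by rewrite (iter_strict_upper_mulmx_nilpotent add1_strict) mulmx0.
move/eqP: sink_reached; rewrite addr_eq0 => /eqP ->.
by rewrite -scaleN1r oppr_pchar2 ?scale1r // pchar_Fp.
Qed.
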